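(* Let $f\in Lip_d(I)$ and $b_r\in Lip_d(I)$ ($r\in\mathbb{N}$) with $b_r(x_0)=f(x_0)$, $b_r(x_N)=f(x_N)$ and $\sup_r\|b_r\|_\infty<\infty$, with (Hölder-)Lipschitz constants $k_f$ and $k_{b_r}$ respectively. Let the scaling functions $\alpha_{i,r}\in Lip_d(I)$ have Lipschitz constants $k_{\alpha_r}$, with $\|\alpha\|_\infty<1$. Let $\mathcal{P}(I)$ be the set of partitions $\Delta=\{x_0,x_1,\dots,x_N\}$ of $I=[x_0,x_N]$ with $x_0<x_1<\dots<x_N$, viewed as vectors in $\mathbb{R}^{N+1}$ with the Euclidean norm $\|\cdot\|_2$. Then the map $\mathcal{D}:\mathcal{P}(I)\to C(I)$, $\mathcal{D}(\Delta)=f^\alpha_{\Delta,b}$, is continuous (with respect to the supremum norm on $C(I)$).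
   Context: For a partition $\Delta: x_0<\dots<x_N$ of $I$: $I_i=[x_{i-1},x_i]$, $l_i^\Delta:I\to I_i$ the affine bijection $l_i^\Delta(x)=\frac{x_i-x_{i-1}}{x_N-x_0}x+\frac{x_Nx_{i-1}-x_0x_i}{x_N-x_0}$, $Q_i=(l_i^\Delta)^{-1}$. $Lip_d(I)$ ($0<d\le1$): real functions $g$ on $I$ with $\sup_{x\ne y}|g(x)-g(y)|/|x-y|^d<\infty$; this supremum is the Lipschitz constant of $g$. $\|\alpha\|_\infty:=\sup_r\max_i\|\alpha_{i,r}\|_\infty$. The non-stationary $\alpha$-fractal function $f^\alpha_{\Delta,b}$ is the uniform limit, independent of $g\in C_f(I)=\{g\in C(I):g(x_0)=f(x_0),g(x_N)=f(x_N)\}$, of $T^{\alpha_1}\circ\cdots\circ T^{\alpha_r}g$, where $(T^{\alpha_r}g)(x)=f(x)+\alpha_{i,r}(Q_i(x))(g-b_r)(Q_i(x))$ for $x\in I_i$. *)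

From Stdlib Require Import Reals Lra ClassicalEpsilon.
Open Scope R_scope.

(* A partition Delta : x_0 < x_1 < ... < x_N of I = [a, c], stored as a
   sequence nat -> R; only the entries 0..N matter. *)
Definition is_partition (a c : R) (N : nat) (Delta : nat -> R) : Prop :=
  (1 <= N)%nat /\ Delta 0%nat = a /\ Delta N = c /\
  (forall i : nat, (i < N)%nat -> Delta i < Delta (S i)).

Definition dist2 (N : nat) (Delta Delta' : nat -> R) : R :=
  sqrt (sum_f_R0 (fun i => (Delta i - Delta' i) ^ 2) N).

Definition Lip_d (a c d : R) (g : R -> R) : Prop :=
  exists K : R, forall x y : R, a <= x <= c -> a <= y <= c -> x <> y ->
    Rabs (g x - g y) <= K * Rpower (Rabs (x - y)) d.

Definition cont_on (a c : R) (g : R -> R) : Prop :=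
  forall x, a <= x <= c -> forall eps, 0 < eps -> exists delta, 0 < delta /\
    forall y, a <= y <= c -> Rabs (y - x) < delta -> Rabs (g y - g x) < eps.

Definition l_map (N : nat) (Delta : nat -> R) (i : nat) (x : R) : R :=
  (Delta i - Delta (i - 1)%nat) / (Delta N - Delta 0%nat) * x
  + (Delta N * Delta (i - 1)%nat - Delta 0%nat * Delta i) / (Delta N - Delta 0%nat).

(* Q_i = (l_i^Delta)^{-1}, written out explicitly. *)
Definition Q_map (N : nat) (Delta : nat -> R) (i : nat) (y : R) : R :=
  (Delta N - Delta 0%nat) / (Delta i - Delta (i - 1)%nat) * (y - Delta (i - 1)%nat)
  + Delta 0%nat.

(* Index i in 1..N of a subinterval I_i = [x_{i-1}, x_i] containing x:
   the least i in 1..N-1 with x <= x_i, and N otherwise.  (At knots, where two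
   subintervals meet, the two possible definitions of T agree on C_f(I).) *)
Fixpoint first_le (Delta : nat -> R) (x : R) (i k : nat) : nat :=
  match k with
  | O => i
  | S k' => if Rle_dec x (Delta i) then i else first_le Delta x (S i) k'
  end.

Definition seg_index (N : nat) (Delta : nat -> R) (x : R) : nat :=
  first_le Delta x 1%nat (N - 1)%nat.

Definition T_op (N : nat) (Delta : nat -> R) (f : R -> R) (b : nat -> R -> R)
  (alpha : nat -> nat -> R -> R) (r : nat) (g : R -> R) : R -> R :=
  fun x => let i := seg_index N Delta x in
           let q := Q_map N Delta i x in
           f x + alpha i r q * (g q - b r q).

Fixpoint iterT (N : nat) (Delta : nat -> R) (f : R -> R) (b : nat -> R -> R)
  (alpha : nat -> nat -> R -> R) (k n : nat) (g : R -> R) : R -> R :=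
  match n with
  | O => g
  | S n' => T_op N Delta f b alpha k (iterT N Delta f b alpha (S k) n' g)
  end.

Definition is_ns_fractal (N : nat) (Delta : nat -> R) (f : R -> R)
  (b : nat -> R -> R) (alpha : nat -> nat -> R -> R) (phi : R -> R) : Prop :=
  let a := Delta 0%nat in let c := Delta N in
  forall g : R -> R, cont_on a c g -> g a = f a -> g c = f c ->
    forall eps, 0 < eps -> exists M : nat, forall r : nat, (M <= r)%nat ->
      forall x, a <= x <= c ->
        Rabs (iterT N Delta f b alpha 1%nat r g x - phi x) < eps.

Definition ns_fractal (N : nat) (Delta : nat -> R) (f : R -> R)
  (b : nat -> R -> R) (alpha : nat -> nat -> R -> R) : R -> R :=
  epsilon (inhabits (fun _ : R => 0)) (is_ns_fractal N Delta f b alpha).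

From Stdlib Require Import Reals Lra Lia ClassicalEpsilon.
Open Scope R_scope.

(* Each T^{alpha_r} is a contraction of constant s = ||alpha||_oo < 1 for the sup
   norm and maps the ball of radius K = (F + B) / (1 - s) into itself, where F and B
   bound |f| and the |b_r|; neither s nor K depends on the partition.  Hence
   f^alpha_{Delta,b} lies within 2 K s^n of the iterate T^{alpha_1} ... T^{alpha_n} f
   for every Delta, and it remains to see that each finite iterate depends
   continuously on Delta.  For one operator this is the joint continuity in (Delta, x)
   of x |-> Phi_i (Q_i x) on I_i: when x and x' lie in subintervals with the same
   index it follows from the formula for Q_i, and otherwise both rescaled points are
   close to an endpoint of I, where Phi_i = alpha_{i,r} (g - b_r) vanishes because g
   and b_r agree with f there. *)

Lemma Rabs_minus_le (p q : R) : Rabs (p - q) <= Rabs p + Rabs q.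
Proof. unfold Rminus. rewrite <- (Rabs_Ropp q). apply Rabs_triang. Qed.

Lemma Rabs_le_bounds (x e : R) : Rabs x <= e -> - e <= x <= e.
Proof. split_Rabs; lra. Qed.

Lemma Rabs_div_le (z w K mu : R) : 0 < mu -> mu <= w -> Rabs z <= K -> Rabs (z / w) <= K / mu.
Proof.
  intros Hmu Hw Hz.
  assert (HK : 0 <= K) by (pose proof (Rabs_pos z); lra).
  unfold Rdiv. rewrite Rabs_mult, Rabs_inv, (Rabs_pos_eq w) by lra.
  apply Rmult_le_compat; [apply Rabs_pos | left; apply Rinv_0_lt_compat; lra | exact Hz |].
  apply Rinv_le_contravar; lra.
Qed.

Lemma pow_mult_small (s C eps : R) : 0 <= s < 1 -> 0 <= C -> 0 < eps ->
  exists n0, forall n, (n0 <= n)%nat -> s ^ n * C < eps.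
Proof.
  intros Hs HC Heps.
  destruct (pow_lt_1_zero s ltac:(rewrite Rabs_pos_eq; lra) (eps / (C + 1))) as [n0 Hn0];
    [apply Rdiv_lt_0_compat; lra |].
  exists n0. intros n Hn. specialize (Hn0 n Hn).
  rewrite Rabs_pos_eq in Hn0 by (apply pow_le; lra).
  assert (Hpow : s ^ n * (C + 1) < eps).
  { replace eps with (eps / (C + 1) * (C + 1)) by (field; lra).
    apply Rmult_lt_compat_r; [lra | exact Hn0]. }
  pose proof (pow_le s n (proj1 Hs)). nra.
Qed.

Lemma Un_cv_tail_bound (u : nat -> R) (l : R) (w : nat -> R) :
  (forall n m, Rabs (u n - u (n + m)%nat) <= w n) -> Un_cv u l ->
  forall n, Rabs (u n - l) <= w n.
Proof.
  intros Htail Hcv n. apply Rle_plus_epsilon. intros e He.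
  destruct (Hcv e He) as [M HM]. specialize (HM (n + M)%nat ltac:(lia)).
  unfold R_dist in HM. specialize (Htail n M).
  replace (u n - l) with ((u n - u (n + M)%nat) + (u (n + M)%nat - l)) by ring.
  eapply Rle_trans; [apply Rabs_triang | lra].
Qed.

Lemma Cauchy_crit_of_tail_bound (u : nat -> R) (s C : R) : 0 <= s < 1 -> 0 <= C ->
  (forall n m, Rabs (u n - u (n + m)%nat) <= s ^ n * C) -> Cauchy_crit u.
Proof.
  intros Hs HC Htail e He. destruct (pow_mult_small s C e Hs HC He) as [M HM].
  exists M. intros n m Hn Hm. unfold R_dist.
  destruct (Nat.le_ge_cases n m) as [Hnm | Hmn].
  - replace m with (n + (m - n))%nat by lia.
    eapply Rle_lt_trans; [apply Htail | apply HM; lia].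
  - rewrite Rabs_minus_sym. replace n with (m + (n - m))%nat by lia.
    eapply Rle_lt_trans; [apply Htail | apply HM; lia].
Qed.

Lemma sum_f_R0_ge_term (g : nat -> R) (n j : nat) : (forall i, 0 <= g i) ->
  (j <= n)%nat -> g j <= sum_f_R0 g n.
Proof.
  intros Hg. induction n as [| n IH]; intros Hj; simpl.
  - replace j with 0%nat by lia. lra.
  - destruct (Nat.eq_dec j (S n)) as [-> | Hne].
    + pose proof (cond_pos_sum g n Hg). lra.
    + pose proof (IH ltac:(lia)). pose proof (Hg (S n)). lra.
Qed.

Definition unif_cont_on (a c : R) (g : R -> R) : Prop :=
  forall eps, 0 < eps -> exists eta, 0 < eta /\ forall y y', a <= y <= c -> a <= y' <= c ->
    Rabs (y - y') < eta -> Rabs (g y - g y') < eps.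

Definition bounded_on (a c : R) (g : R -> R) : Prop :=
  exists M, forall y, a <= y <= c -> Rabs (g y) <= M.

Definition equi_unif_cont_on (a c : R) (N : nat) (Phi : nat -> R -> R) : Prop :=
  forall eps, 0 < eps -> exists eta, 0 < eta /\ forall i, (1 <= i <= N)%nat ->
    forall y y', a <= y <= c -> a <= y' <= c ->
    Rabs (y - y') < eta -> Rabs (Phi i y - Phi i y') < eps.

Section UniformContinuity.
Variables a c : R.

Lemma Lip_d_unif_cont (d : R) (g : R -> R) : 0 < d -> Lip_d a c d g -> unif_cont_on a c g.
Proof.
  intros Hd [K HK] eps Heps.
  set (K' := Rabs K + 1).
  assert (HK' : 0 < K') by (unfold K'; pose proof (Rabs_pos K); lra).
  assert (Hratio : 0 < eps / K') by (apply Rdiv_lt_0_compat; lra).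
  exists (Rpower (eps / K') (/ d)); split; [unfold Rpower; apply exp_pos |].
  intros y y' Hy Hy' Hyy.
  destruct (Req_dec y y') as [<- | Hne]; [rewrite Rminus_diag, Rabs_R0; lra |].
  assert (Hpow : Rpower (Rabs (y - y')) d < eps / K').
  { replace (eps / K') with (Rpower (Rpower (eps / K') (/ d)) d)
      by (rewrite Rpower_mult, Rinv_l by lra; apply Rpower_1; exact Hratio).
    apply Rlt_Rpower_l; [lra | split; [apply Rabs_pos_lt; lra | exact Hyy]]. }
  assert (Hpos : 0 < Rpower (Rabs (y - y')) d) by (unfold Rpower; apply exp_pos).
  apply Rle_lt_trans with (K' * Rpower (Rabs (y - y')) d).
  - apply Rle_trans with (K * Rpower (Rabs (y - y')) d); [apply HK; assumption |].
    apply Rmult_le_compat_r; [lra | unfold K'; pose proof (Rle_abs K); lra].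
  - replace eps with (K' * (eps / K')) by (field; lra).
    apply Rmult_lt_compat_l; assumption.
Qed.

Lemma unif_cont_on_cont_on (g : R -> R) : unif_cont_on a c g -> cont_on a c g.
Proof.
  intros Hg x Hx eps Heps.
  destruct (Hg eps Heps) as [eta [Heta Hclose]].
  exists eta; split; [exact Heta |].
  intros y Hy Hyx. exact (Hclose y x Hy Hx Hyx).
Qed.

Lemma unif_cont_on_minus (g h : R -> R) :
  unif_cont_on a c g -> unif_cont_on a c h -> unif_cont_on a c (fun y => g y - h y).
Proof.
  intros Hg Hh eps Heps.
  destruct (Hg (eps / 2)) as [eta1 [Heta1 H1]]; [lra |].
  destruct (Hh (eps / 2)) as [eta2 [Heta2 H2]]; [lra |].
  exists (Rmin eta1 eta2); split; [apply Rmin_pos; assumption |].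
  intros y y' Hy Hy' Hyy.
  assert (E1 := H1 y y' Hy Hy' (Rlt_le_trans _ _ _ Hyy (Rmin_l _ _))).
  assert (E2 := H2 y y' Hy Hy' (Rlt_le_trans _ _ _ Hyy (Rmin_r _ _))).
  replace (g y - h y - (g y' - h y')) with ((g y - g y') - (h y - h y')) by ring.
  eapply Rle_lt_trans; [apply Rabs_minus_le | lra].
Qed.

Lemma unif_cont_on_mult (g h : R -> R) :
  unif_cont_on a c g -> unif_cont_on a c h -> bounded_on a c g -> bounded_on a c h ->
  unif_cont_on a c (fun y => g y * h y).
Proof.
  intros Hg Hh [Mg HMg] [Mh HMh] eps Heps.
  set (M := Rabs Mg + Rabs Mh + 1).
  assert (HM : 0 < M) by (unfold M; pose proof (Rabs_pos Mg); pose proof (Rabs_pos Mh); lra).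
  assert (Heps' : 0 < eps / (2 * M)) by (apply Rdiv_lt_0_compat; lra).
  destruct (Hg _ Heps') as [eta1 [Heta1 H1]].
  destruct (Hh _ Heps') as [eta2 [Heta2 H2]].
  exists (Rmin eta1 eta2); split; [apply Rmin_pos; assumption |].
  intros y y' Hy Hy' Hyy.
  assert (E1 := H1 y y' Hy Hy' (Rlt_le_trans _ _ _ Hyy (Rmin_l _ _))).
  assert (E2 := H2 y y' Hy Hy' (Rlt_le_trans _ _ _ Hyy (Rmin_r _ _))).
  assert (Bg : Rabs (g y) <= M)
    by (pose proof (HMg y Hy); pose proof (Rle_abs Mg); pose proof (Rabs_pos Mh); unfold M; lra).
  assert (Bh : Rabs (h y') <= M)
    by (pose proof (HMh y' Hy'); pose proof (Rle_abs Mh); pose proof (Rabs_pos Mg); unfold M; lra).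
  assert (Half : M * (eps / (2 * M)) = eps / 2) by (field; lra).
  assert (A1 : Rabs (g y) * Rabs (h y - h y') < eps / 2).
  { rewrite <- Half. apply Rle_lt_trans with (M * Rabs (h y - h y')).
    - apply Rmult_le_compat_r; [apply Rabs_pos | exact Bg].
    - apply Rmult_lt_compat_l; assumption. }
  assert (A2 : Rabs (g y - g y') * Rabs (h y') < eps / 2).
  { rewrite <- Half, (Rmult_comm M). apply Rle_lt_trans with (Rabs (g y - g y') * M).
    - apply Rmult_le_compat_l; [apply Rabs_pos | exact Bh].
    - apply Rmult_lt_compat_r; assumption. }
  replace (g y * h y - g y' * h y') with (g y * (h y - h y') + (g y - g y') * h y') by ring.
  eapply Rle_lt_trans; [apply Rabs_triang |]. rewrite !Rabs_mult. lra.
Qed.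

Lemma equi_unif_cont_on_finite (N : nat) (Phi : nat -> R -> R) :
  (forall i, (1 <= i <= N)%nat -> unif_cont_on a c (Phi i)) -> equi_unif_cont_on a c N Phi.
Proof.
  induction N as [| N IH]; intros HPhi eps Heps.
  - exists 1; split; [lra | intros i Hi; lia].
  - destruct (IH (fun i Hi => HPhi i ltac:(lia)) eps Heps) as [eta1 [Heta1 H1]].
    destruct (HPhi (S N) ltac:(lia) eps Heps) as [eta2 [Heta2 H2]].
    exists (Rmin eta1 eta2); split; [apply Rmin_pos; assumption |].
    intros i Hi y y' Hy Hy' Hyy.
    destruct (Nat.eq_dec i (S N)) as [-> | Hne].
    + exact (H2 y y' Hy Hy' (Rlt_le_trans _ _ _ Hyy (Rmin_r _ _))).
    + exact (H1 i ltac:(lia) y y' Hy Hy' (Rlt_le_trans _ _ _ Hyy (Rmin_l _ _))).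
Qed.

Lemma cont_on_bounded (g : R -> R) : a <= c -> cont_on a c g -> bounded_on a c g.
Proof.
  intros Hac Hg.
  pose (clamp := fun x => Rmax a (Rmin c x)).
  assert (Hclamp_in : forall x, a <= clamp x <= c)
    by (intros x; unfold clamp, Rmax, Rmin; repeat destruct Rle_dec; lra).
  assert (Hclamp_id : forall x, a <= x <= c -> clamp x = x)
    by (intros x Hx; unfold clamp, Rmax, Rmin; repeat destruct Rle_dec; lra).
  assert (Hclamp_lip : forall x y, Rabs (clamp y - clamp x) <= Rabs (y - x))
    by (intros x y; unfold clamp, Rmax, Rmin; repeat destruct Rle_dec; split_Rabs; lra).
  assert (Hcont : forall x, a <= x <= c -> continuity_pt (fun y => Rabs (g (clamp y))) x).
  { intros x _ eps Heps.
    destruct (Hg (clamp x) (Hclamp_in x) eps Heps) as [eta [Heta Hclose]].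
    exists eta; split; [exact Heta |]. intros y [_ Hy]. simpl in *. unfold R_dist in *.
    eapply Rle_lt_trans; [apply Rabs_triang_inv2 |].
    apply Hclose; [apply Hclamp_in |]. eapply Rle_lt_trans; [apply Hclamp_lip | exact Hy]. }
  destruct (continuity_ab_maj _ a c Hac Hcont) as [m [Hm _]].
  exists (Rabs (g (clamp m))). intros y Hy.
  specialize (Hm y Hy). rewrite (Hclamp_id y Hy) in Hm. exact Hm.
Qed.

End UniformContinuity.
Lemma first_le_spec (D : nat -> R) (x : R) (k i : nat) : (1 <= i)%nat ->
  D (i - 1)%nat <= x <= D (i + k)%nat ->
  (i <= first_le D x i k <= i + k)%nat /\
  D (first_le D x i k - 1)%nat <= x <= D (first_le D x i k).
Proof.
  revert i. induction k as [| k IH]; intros i Hi Hx; simpl.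
  - rewrite Nat.add_0_r in Hx. split; [lia | exact Hx].
  - destruct (Rle_dec x (D i)) as [Hle | Hgt]; [split; [lia | lra] |].
    assert (Hx' : D (S i - 1)%nat <= x <= D (S i + k)%nat).
    { replace (S i - 1)%nat with i by lia. replace (S i + k)%nat with (i + S k)%nat by lia. lra. }
    destruct (IH (S i) ltac:(lia) Hx') as [Hrange Hseg]. split; [lia | exact Hseg].
Qed.

Section Partition.
Variables (a c : R) (N : nat) (D : nat -> R).
Hypothesis HD : is_partition a c N D.

Lemma partition_le j k : (j <= k <= N)%nat -> D j <= D k.
Proof.
  pose proof HD as [_ [_ [_ Hlt]]]. intros [Hjk HkN].
  induction Hjk as [| k Hjk IH]; [lra |].
  specialize (Hlt k ltac:(lia)). specialize (IH ltac:(lia)). lra.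
Qed.

Lemma partition_lt i : (1 <= i <= N)%nat -> D (i - 1)%nat < D i.
Proof.
  pose proof HD as [_ [_ [_ Hlt]]]. intros Hi.
  replace i with (S (i - 1)) at 2 by lia. apply Hlt; lia.
Qed.

Lemma partition_ends_lt : a < c.
Proof.
  pose proof HD as [HN1 [H0 [HN _]]].
  pose proof (partition_lt 1 ltac:(lia)). pose proof (partition_le 1 N ltac:(lia)).
  simpl in *. lra.
Qed.

Lemma partition_min_gap :
  exists lam, 0 < lam /\ forall i, (1 <= i <= N)%nat -> lam <= D i - D (i - 1)%nat.
Proof.
  assert (Hgap : forall n, (n <= N)%nat -> exists lam, 0 < lam /\
            forall i, (1 <= i <= n)%nat -> lam <= D i - D (i - 1)%nat).
  { induction n as [| n IH]; intros Hn.
    - exists 1. split; [lra | intros i Hi; lia].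
    - destruct (IH ltac:(lia)) as [lam [Hlam Hle]].
      pose proof (partition_lt (S n) ltac:(lia)).
      exists (Rmin lam (D (S n) - D (S n - 1)%nat)). split; [apply Rmin_pos; lra |].
      intros i Hi. destruct (Nat.eq_dec i (S n)) as [-> | Hne]; [apply Rmin_r |].
      eapply Rle_trans; [apply Rmin_l | apply Hle; lia]. }
  exact (Hgap N (Nat.le_refl N)).
Qed.

Lemma seg_index_spec x : a <= x <= c ->
  (1 <= seg_index N D x <= N)%nat /\
  D (seg_index N D x - 1)%nat <= x <= D (seg_index N D x).
Proof.
  pose proof HD as [HN1 [H0 [HN _]]]. intros Hx.
  assert (Hx' : D (1 - 1)%nat <= x <= D (1 + (N - 1))%nat).
  { replace (1 + (N - 1))%nat with N by lia. simpl. lra. }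
  destruct (first_le_spec D x (N - 1) 1 (le_n 1) Hx') as [Hrange Hseg].
  unfold seg_index. split; [lia | exact Hseg].
Qed.

Lemma Q_map_range i x : (1 <= i <= N)%nat -> D (i - 1)%nat <= x <= D i ->
  a <= Q_map N D i x <= c.
Proof.
  pose proof HD as [_ [H0 [HN _]]]. intros Hi Hx.
  pose proof (partition_lt i Hi). pose proof partition_ends_lt.
  unfold Q_map. rewrite H0, HN.
  set (t := (x - D (i - 1)%nat) / (D i - D (i - 1)%nat)).
  assert (Ht : t * (D i - D (i - 1)%nat) = x - D (i - 1)%nat) by (unfold t; field; lra).
  assert (Ht01 : 0 <= t <= 1) by (split; nra).
  replace ((c - a) / (D i - D (i - 1)%nat) * (x - D (i - 1)%nat) + a) with (a + (c - a) * t)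
    by (unfold t; field; lra).
  split; nra.
Qed.

Lemma Q_map_seg_index_left : Q_map N D (seg_index N D a) a = a.
Proof.
  pose proof HD as [_ [H0 _]]. pose proof partition_ends_lt as Hac.
  destruct (seg_index_spec a ltac:(lra)) as [Hi Hseg].
  pose proof (partition_le 0 (seg_index N D a - 1) ltac:(lia)) as Hle.
  unfold Q_map. replace (D (seg_index N D a - 1)%nat) with a by lra. rewrite H0. ring.
Qed.

Lemma Q_map_seg_index_right : Q_map N D (seg_index N D c) c = c.
Proof.
  pose proof HD as [_ [H0 [HN _]]]. pose proof partition_ends_lt as Hac.
  destruct (seg_index_spec c ltac:(lra)) as [Hi Hseg].
  pose proof (partition_le (seg_index N D c) N ltac:(lia)) as Hle.
  pose proof (partition_lt _ Hi) as Hlt.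
  unfold Q_map. rewrite H0, HN. replace (D (seg_index N D c)) with c by lra. field. lra.
Qed.

End Partition.

Definition close (N : nat) (D D' : nat -> R) (del : R) : Prop :=
  forall j, (j <= N)%nat -> Rabs (D j - D' j) <= del.

Lemma close_refl (N : nat) (D : nat -> R) (del : R) : 0 <= del -> close N D D del.
Proof. intros Hdel j _. rewrite Rminus_diag, Rabs_R0. exact Hdel. Qed.

Lemma close_sym (N : nat) (D D' : nat -> R) (del : R) : close N D D' del -> close N D' D del.
Proof. intros Hclose j Hj. rewrite Rabs_minus_sym. exact (Hclose j Hj). Qed.

Lemma close_le (N : nat) (D D' : nat -> R) (del del' : R) :
  del <= del' -> close N D D' del -> close N D D' del'.
Proof. intros Hle Hclose j Hj. specialize (Hclose j Hj). lra. Qed.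

Lemma dist2_close (N : nat) (D D' : nat -> R) (del : R) :
  dist2 N D D' < del -> close N D D' del.
Proof.
  intros Hdist j Hj. unfold dist2 in Hdist. left. eapply Rle_lt_trans; [| exact Hdist].
  rewrite <- sqrt_Rsqr_abs. apply sqrt_le_1_alt. unfold Rsqr.
  replace ((D j - D' j) * (D j - D' j)) with ((D j - D' j) ^ 2) by ring.
  apply (sum_f_R0_ge_term (fun i => (D i - D' i) ^ 2)); [| exact Hj].
  intros i. apply pow2_ge_0.
Qed.

Definition glue (N : nat) (D : nat -> R) (Phi : nat -> R -> R) (x : R) : R :=
  Phi (seg_index N D x) (Q_map N D (seg_index N D x) x).

Lemma glue_left (a c : R) (N : nat) (D : nat -> R) (Phi : nat -> R -> R) :
  is_partition a c N D -> glue N D Phi a = Phi (seg_index N D a) a.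
Proof. intros HD. unfold glue. rewrite (Q_map_seg_index_left a c N D HD). reflexivity. Qed.

Lemma glue_right (a c : R) (N : nat) (D : nat -> R) (Phi : nat -> R -> R) :
  is_partition a c N D -> glue N D Phi c = Phi (seg_index N D c) c.
Proof. intros HD. unfold glue. rewrite (Q_map_seg_index_right a c N D HD). reflexivity. Qed.

Section TwoPartitions.
Variables (a c : R) (N : nat) (D D' : nat -> R) (mu del : R).
Hypotheses (HD : is_partition a c N D) (HD' : is_partition a c N D').
Hypothesis Hmu : 0 < mu.
Hypothesis Hgap : forall i, (1 <= i <= N)%nat -> mu <= D i - D (i - 1)%nat.
Hypothesis Hgap' : forall i, (1 <= i <= N)%nat -> mu <= D' i - D' (i - 1)%nat.
Hypothesis Hclose : close N D D' del.

Lemma Q_map_close_same_piece i x x' : (1 <= i <= N)%nat -> D (i - 1)%nat <= x <= D i ->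
  Rabs (x - x') <= del -> Rabs (Q_map N D i x - Q_map N D' i x') <= 3 * (c - a) * del / mu.
Proof.
  intros Hi Hx Hxx.
  pose proof HD as [_ [H0 [HN _]]]. pose proof HD' as [_ [H0' [HN' _]]].
  pose proof (partition_lt a c N D HD i Hi) as Hw.
  pose proof (Hgap' i Hi) as Hw'.
  pose proof (partition_ends_lt a c N D HD) as Hac.
  apply Rabs_le_bounds in Hxx.
  pose proof (Rabs_le_bounds _ _ (Hclose (i - 1)%nat ltac:(lia))) as Hu.
  pose proof (Rabs_le_bounds _ _ (Hclose i ltac:(lia))) as Hv.
  unfold Q_map. rewrite H0, HN, H0', HN'.
  set (u := D (i - 1)%nat) in *. set (v := D i) in *.
  set (u' := D' (i - 1)%nat) in *. set (v' := D' i) in *.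
  replace ((c - a) / (v - u) * (x - u) + a - ((c - a) / (v' - u') * (x' - u') + a))
    with ((c - a) * ((x - u) * (v' - v) + (x - v) * (u - u') + (x - x') * (v - u))
          / (v - u) / (v' - u')) by (field; lra).
  apply Rabs_div_le; [exact Hmu | exact Hw' |].
  replace (3 * (c - a) * del) with (3 * (c - a) * del * (v - u) / (v - u)) by (field; lra).
  apply Rabs_div_le; [lra | lra |].
  rewrite Rabs_mult, (Rabs_pos_eq (c - a)) by lra.
  replace (3 * (c - a) * del * (v - u)) with ((c - a) * (3 * del * (v - u))) by ring.
  apply Rmult_le_compat_l; [lra |]. apply Rabs_le. split; nra.
Qed.

Lemma Q_map_close_later_piece i i' x x' : (1 <= i)%nat -> (i < i' <= N)%nat ->
  D (i - 1)%nat <= x <= D i -> D' (i' - 1)%nat <= x' <= D' i' -> Rabs (x - x') <= del ->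
  Rabs (c - Q_map N D i x) <= 3 * (c - a) * del / mu /\
  Rabs (Q_map N D' i' x' - a) <= 3 * (c - a) * del / mu.
Proof.
  intros Hi Hii Hx Hx' Hxx.
  pose proof HD as [_ [H0 [HN _]]]. pose proof HD' as [_ [H0' [HN' _]]].
  pose proof (partition_ends_lt a c N D HD) as Hac.
  pose proof (partition_le a c N D' HD' i (i' - 1) ltac:(lia)) as Hmono'.
  pose proof (partition_le a c N D HD i (i' - 1) ltac:(lia)) as Hmono.
  pose proof (Rabs_le_bounds _ _ (Hclose (i' - 1)%nat ltac:(lia))) as Hu.
  pose proof (Rabs_le_bounds _ _ (Hclose i ltac:(lia))) as Hv.
  pose proof (Hgap i ltac:(lia)) as Hw. pose proof (Hgap' i' ltac:(lia)) as Hw'.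
  apply Rabs_le_bounds in Hxx.
  unfold Q_map. rewrite H0, HN, H0', HN'. split.
  - replace (c - ((c - a) / (D i - D (i - 1)%nat) * (x - D (i - 1)%nat) + a))
      with ((c - a) * (D i - x) / (D i - D (i - 1)%nat)) by (field; lra).
    apply Rabs_div_le; [exact Hmu | exact Hw |]. apply Rabs_le. split; nra.
  - replace ((c - a) / (D' i' - D' (i' - 1)%nat) * (x' - D' (i' - 1)%nat) + a - a)
      with ((c - a) * (x' - D' (i' - 1)%nat) / (D' i' - D' (i' - 1)%nat)) by (field; lra).
    apply Rabs_div_le; [exact Hmu | exact Hw' |]. apply Rabs_le. split; nra.
Qed.

Variables (Phi : nat -> R -> R) (eta eps : R).
Hypothesis HPhi : forall i, (1 <= i <= N)%nat -> forall y y', a <= y <= c -> a <= y' <= c ->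
  Rabs (y - y') < eta -> Rabs (Phi i y - Phi i y') < eps / 2.
Hypothesis HPhi_ends : forall i, (1 <= i <= N)%nat -> Phi i a = 0 /\ Phi i c = 0.
Hypothesis Hshift : 3 * (c - a) * del / mu < eta.

Lemma glue_close_same_piece x x' : a <= x <= c -> a <= x' <= c -> Rabs (x - x') <= del ->
  seg_index N D x = seg_index N D' x' -> Rabs (glue N D Phi x - glue N D' Phi x') < eps.
Proof.
  intros Hx Hx' Hxx Hsame.
  destruct (seg_index_spec a c N D HD x Hx) as [Hi Hseg].
  destruct (seg_index_spec a c N D' HD' x' Hx') as [_ Hseg'].
  unfold glue. rewrite <- Hsame in *.
  set (i := seg_index N D x) in *.
  pose proof (Q_map_close_same_piece i x x' Hi Hseg Hxx) as Hq.
  assert (Hlt : Rabs (Phi i (Q_map N D i x) - Phi i (Q_map N D' i x')) < eps / 2).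
  { apply HPhi; [exact Hi | apply (Q_map_range a c N D HD) | apply (Q_map_range a c N D' HD') | lra];
      assumption. }
  pose proof (Rabs_pos (Phi i (Q_map N D i x) - Phi i (Q_map N D' i x'))). lra.
Qed.

Lemma glue_close_later_piece x x' : a <= x <= c -> a <= x' <= c -> Rabs (x - x') <= del ->
  (seg_index N D x < seg_index N D' x')%nat -> Rabs (glue N D Phi x - glue N D' Phi x') < eps.
Proof.
  intros Hx Hx' Hxx Hlt.
  destruct (seg_index_spec a c N D HD x Hx) as [Hi Hseg].
  destruct (seg_index_spec a c N D' HD' x' Hx') as [Hi' Hseg'].
  pose proof (partition_ends_lt a c N D HD) as Hac.
  unfold glue. set (i := seg_index N D x) in *. set (i' := seg_index N D' x') in *.
  destruct (Q_map_close_later_piece i i' x x' ltac:(lia) ltac:(lia) Hseg Hseg' Hxx) as [Hq Hq'].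
  destruct (HPhi_ends i Hi) as [_ Hc0]. destruct (HPhi_ends i' Hi') as [Ha0 _].
  assert (E : Rabs (Phi i c - Phi i (Q_map N D i x)) < eps / 2).
  { apply HPhi; [exact Hi | lra | apply (Q_map_range a c N D HD); assumption | lra]. }
  assert (E' : Rabs (Phi i' (Q_map N D' i' x') - Phi i' a) < eps / 2).
  { apply HPhi; [exact Hi' | apply (Q_map_range a c N D' HD'); assumption | lra | lra]. }
  rewrite Hc0, Rminus_0_l, Rabs_Ropp in E. rewrite Ha0, Rminus_0_r in E'.
  eapply Rle_lt_trans; [apply Rabs_minus_le | lra].
Qed.

End TwoPartitions.

Lemma glue_joint_continuity (a c : R) (N : nat) (D : nat -> R) (Phi : nat -> R -> R) :
  is_partition a c N D -> equi_unif_cont_on a c N Phi ->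
  (forall i, (1 <= i <= N)%nat -> Phi i a = 0 /\ Phi i c = 0) ->
  forall eps, 0 < eps -> exists del, 0 < del /\
    forall D', is_partition a c N D' -> close N D D' del ->
    forall x x', a <= x <= c -> a <= x' <= c -> Rabs (x - x') <= del ->
    Rabs (glue N D Phi x - glue N D' Phi x') < eps.
Proof.
  intros HD HPhi HPhi_ends eps Heps.
  destruct (partition_min_gap a c N D HD) as [lam [Hlam Hgap]].
  pose proof (partition_ends_lt a c N D HD) as Hac.
  destruct (HPhi (eps / 2)) as [eta [Heta Huc]]; [lra |].
  set (mu := lam / 2).
  set (del := Rmin (lam / 4) (eta * mu / (4 * (c - a)))).
  assert (Hmu : 0 < mu) by (unfold mu; lra).
  assert (Hdel : 0 < del) by (apply Rmin_pos; [lra | apply Rdiv_lt_0_compat; nra]).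
  assert (Hdel_lam : del <= lam / 4) by apply Rmin_l.
  assert (Hshift : 3 * (c - a) * del / mu < eta).
  { assert (Hdel_eta : del * (4 * (c - a)) <= eta * mu).
    { pose proof (Rmin_r (lam / 4) (eta * mu / (4 * (c - a)))) as Hr. fold del in Hr.
      apply (Rmult_le_compat_r (4 * (c - a))) in Hr; [| lra].
      replace (eta * mu / (4 * (c - a)) * (4 * (c - a))) with (eta * mu) in Hr by (field; lra).
      exact Hr. }
    apply (Rmult_lt_reg_r mu); [exact Hmu |].
    replace (3 * (c - a) * del / mu * mu) with (3 * (c - a) * del) by (field; lra). nra. }
  exists del; split; [exact Hdel |].
  intros D' HD' Hclose x x' Hx Hx' Hxx.
  assert (Hgap_mu : forall i, (1 <= i <= N)%nat -> mu <= D i - D (i - 1)%nat)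
    by (intros i Hi; specialize (Hgap i Hi); unfold mu; lra).
  assert (Hgap_mu' : forall i, (1 <= i <= N)%nat -> mu <= D' i - D' (i - 1)%nat).
  { intros i Hi. specialize (Hgap i Hi).
    pose proof (Rabs_le_bounds _ _ (Hclose i ltac:(lia))).
    pose proof (Rabs_le_bounds _ _ (Hclose (i - 1)%nat ltac:(lia))).
    unfold mu. lra. }
  destruct (Compare_dec.lt_eq_lt_dec (seg_index N D x) (seg_index N D' x')) as [[Hlt | Heq] | Hgt].
  - eapply glue_close_later_piece with (mu := mu) (del := del) (eta := eta); eauto.
  - eapply glue_close_same_piece with (mu := mu) (del := del) (eta := eta); eauto.
  - rewrite Rabs_minus_sym.
    eapply glue_close_later_piece with (mu := mu) (del := del) (eta := eta); eauto.
    + apply close_sym. exact Hclose.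
    + rewrite Rabs_minus_sym. exact Hxx.
Qed.

(* C_f(I), with uniform continuity in place of continuity (the same on compact I). *)
Definition in_Cf (a c : R) (f h : R -> R) : Prop :=
  unif_cont_on a c h /\ h a = f a /\ h c = f c.

Lemma iterT_add N D f b alpha n m k g :
  iterT N D f b alpha k (n + m) g = iterT N D f b alpha k n (iterT N D f b alpha (k + n) m g).
Proof.
  revert k. induction n as [| n IH]; intros k; simpl.
  - rewrite Nat.add_0_r. reflexivity.
  - rewrite IH. replace (S k + n)%nat with (k + S n)%nat by lia. reflexivity.
Qed.

Section Operators.
Variables (a c s B : R) (N : nat) (f : R -> R) (b : nat -> R -> R) (alpha : nat -> nat -> R -> R).
Hypothesis Hac : a < c.
Hypothesis Hs : 0 <= s < 1.
Hypothesis Hf : unif_cont_on a c f.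
Hypothesis Hb : forall r, (1 <= r)%nat -> unif_cont_on a c (b r).
Hypothesis Hb_ends : forall r, (1 <= r)%nat -> b r a = f a /\ b r c = f c.
Hypothesis Hb_bound : forall r, (1 <= r)%nat -> forall y, a <= y <= c -> Rabs (b r y) <= B.
Hypothesis Halpha : forall i r, (1 <= i <= N)%nat -> (1 <= r)%nat -> unif_cont_on a c (alpha i r).
Hypothesis Halpha_bound : forall i r, (1 <= i <= N)%nat -> (1 <= r)%nat ->
  forall y, a <= y <= c -> Rabs (alpha i r y) <= s.

Definition T_summand (r : nat) (h : R -> R) : nat -> R -> R :=
  fun i y => alpha i r y * (h y - b r y).

Lemma T_op_glue D r h x : T_op N D f b alpha r h x = f x + glue N D (T_summand r h) x.
Proof. reflexivity. Qed.

Lemma T_summand_equi_unif_cont r h : (1 <= r)%nat -> in_Cf a c f h ->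
  equi_unif_cont_on a c N (T_summand r h).
Proof.
  intros Hr [Hh _]. apply equi_unif_cont_on_finite. intros i Hi.
  apply unif_cont_on_mult.
  - exact (Halpha i r Hi Hr).
  - exact (unif_cont_on_minus a c h (b r) Hh (Hb r Hr)).
  - exists s. exact (Halpha_bound i r Hi Hr).
  - destruct (cont_on_bounded a c h (Rlt_le _ _ Hac) (unif_cont_on_cont_on a c h Hh)) as [M HM].
    exists (M + B). intros y Hy.
    pose proof (HM y Hy). pose proof (Hb_bound r Hr y Hy).
    eapply Rle_trans; [apply Rabs_minus_le | lra].
Qed.

Lemma T_summand_ends r h i : (1 <= r)%nat -> in_Cf a c f h ->
  T_summand r h i a = 0 /\ T_summand r h i c = 0.
Proof.
  intros Hr [_ [Ha Hc]]. destruct (Hb_ends r Hr) as [Hba Hbc].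
  unfold T_summand. rewrite Ha, Hc, Hba, Hbc, !Rminus_diag, !Rmult_0_r. split; reflexivity.
Qed.

Lemma T_op_glue_joint_continuity D r h : is_partition a c N D -> (1 <= r)%nat -> in_Cf a c f h ->
  forall eps, 0 < eps -> exists del, 0 < del /\
    forall D', is_partition a c N D' -> close N D D' del ->
    forall x x', a <= x <= c -> a <= x' <= c -> Rabs (x - x') <= del ->
    Rabs (glue N D (T_summand r h) x - glue N D' (T_summand r h) x') < eps.
Proof.
  intros HD Hr Hh. apply glue_joint_continuity; [exact HD | |].
  - exact (T_summand_equi_unif_cont r h Hr Hh).
  - intros i _. exact (T_summand_ends r h i Hr Hh).
Qed.

Lemma T_op_in_Cf D r h : is_partition a c N D -> (1 <= r)%nat -> in_Cf a c f h ->
  in_Cf a c f (T_op N D f b alpha r h).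
Proof.
  intros HD Hr Hh. split; [| split].
  - intros eps Heps.
    destruct (T_op_glue_joint_continuity D r h HD Hr Hh (eps / 2)) as [del [Hdel Hglue]]; [lra |].
    destruct (Hf (eps / 2)) as [eta [Heta Hfuc]]; [lra |].
    exists (Rmin eta del); split; [apply Rmin_pos; assumption |].
    intros y y' Hy Hy' Hyy.
    pose proof (Hfuc y y' Hy Hy' (Rlt_le_trans _ _ _ Hyy (Rmin_l _ _))) as E1.
    pose proof (Hglue D HD (close_refl N D del (Rlt_le _ _ Hdel)) y y' Hy Hy'
                  (Rlt_le _ _ (Rlt_le_trans _ _ _ Hyy (Rmin_r _ _)))) as E2.
    rewrite !T_op_glue.
    replace (f y + glue N D (T_summand r h) y - (f y' + glue N D (T_summand r h) y'))
      with ((f y - f y') + (glue N D (T_summand r h) y - glue N D (T_summand r h) y')) by ring.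
    eapply Rle_lt_trans; [apply Rabs_triang | lra].
  - rewrite T_op_glue, (glue_left a c N D _ HD).
    rewrite (proj1 (T_summand_ends r h _ Hr Hh)). ring.
  - rewrite T_op_glue, (glue_right a c N D _ HD).
    rewrite (proj2 (T_summand_ends r h _ Hr Hh)). ring.
Qed.

Lemma T_op_continuous_in_partition D r h : is_partition a c N D -> (1 <= r)%nat -> in_Cf a c f h ->
  forall eps, 0 < eps -> exists del, 0 < del /\
    forall D', is_partition a c N D' -> close N D D' del ->
    forall x, a <= x <= c -> Rabs (T_op N D f b alpha r h x - T_op N D' f b alpha r h x) < eps.
Proof.
  intros HD Hr Hh eps Heps.
  destruct (T_op_glue_joint_continuity D r h HD Hr Hh eps Heps) as [del [Hdel Hglue]].
  exists del; split; [exact Hdel |]. intros D' HD' Hclose x Hx.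
  rewrite !T_op_glue.
  replace (f x + glue N D (T_summand r h) x - (f x + glue N D' (T_summand r h) x))
    with (glue N D (T_summand r h) x - glue N D' (T_summand r h) x) by ring.
  apply Hglue; [exact HD' | exact Hclose | exact Hx | exact Hx |].
  rewrite Rminus_diag, Rabs_R0. lra.
Qed.

Lemma T_op_contraction D r g h m : is_partition a c N D -> (1 <= r)%nat ->
  (forall y, a <= y <= c -> Rabs (g y - h y) <= m) ->
  forall x, a <= x <= c ->
  Rabs (T_op N D f b alpha r g x - T_op N D f b alpha r h x) <= s * m.
Proof.
  intros HD Hr Hgh x Hx.
  destruct (seg_index_spec a c N D HD x Hx) as [Hi Hseg].
  pose proof (Q_map_range a c N D HD _ x Hi Hseg) as Hq.
  rewrite !T_op_glue. unfold glue, T_summand.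
  set (i := seg_index N D x) in *. set (q := Q_map N D i x) in *.
  replace (f x + alpha i r q * (g q - b r q) - (f x + alpha i r q * (h q - b r q)))
    with (alpha i r q * (g q - h q)) by ring.
  rewrite Rabs_mult.
  apply Rmult_le_compat; [apply Rabs_pos | apply Rabs_pos | |].
  - exact (Halpha_bound i r Hi Hr q Hq).
  - exact (Hgh q Hq).
Qed.

Lemma iterT_contraction D n k g h m : is_partition a c N D -> (1 <= k)%nat ->
  (forall y, a <= y <= c -> Rabs (g y - h y) <= m) ->
  forall x, a <= x <= c ->
  Rabs (iterT N D f b alpha k n g x - iterT N D f b alpha k n h x) <= s ^ n * m.
Proof.
  intros HD. revert k. induction n as [| n IH]; intros k Hk Hgh x Hx; simpl.
  - rewrite Rmult_1_l. exact (Hgh x Hx).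
  - rewrite Rmult_assoc. apply (T_op_contraction D k); [exact HD | exact Hk | | exact Hx].
    intros y Hy. apply IH; [lia | exact Hgh | exact Hy].
Qed.

Lemma iterT_in_Cf D n k g : is_partition a c N D -> (1 <= k)%nat -> in_Cf a c f g ->
  in_Cf a c f (iterT N D f b alpha k n g).
Proof.
  intros HD. revert k. induction n as [| n IH]; intros k Hk Hg; simpl; [exact Hg |].
  apply T_op_in_Cf; [exact HD | exact Hk | apply IH; [lia | exact Hg]].
Qed.

Lemma iterT_continuous_in_partition D n k g : is_partition a c N D -> (1 <= k)%nat ->
  in_Cf a c f g -> forall eps, 0 < eps -> exists del, 0 < del /\
    forall D', is_partition a c N D' -> close N D D' del ->
    forall x, a <= x <= c ->
    Rabs (iterT N D f b alpha k n g x - iterT N D' f b alpha k n g x) < eps.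
Proof.
  intros HD. revert k. induction n as [| n IH]; intros k Hk Hg eps Heps.
  - exists 1; split; [lra |]. intros D' _ _ x _. simpl. rewrite Rminus_diag, Rabs_R0. exact Heps.
  - destruct (IH (S k) ltac:(lia) Hg (eps / 2)) as [del1 [Hdel1 H1]]; [lra |].
    pose proof (iterT_in_Cf D n (S k) g HD ltac:(lia) Hg) as Hh.
    destruct (T_op_continuous_in_partition D k _ HD Hk Hh (eps / 2)) as [del2 [Hdel2 H2]]; [lra |].
    exists (Rmin del1 del2); split; [apply Rmin_pos; assumption |].
    intros D' HD' Hclose x Hx. simpl.
    set (h := iterT N D f b alpha (S k) n g) in *. set (h' := iterT N D' f b alpha (S k) n g).
    pose proof (H2 D' HD' (close_le N D D' _ _ (Rmin_r _ _) Hclose) x Hx) as E1.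
    assert (E2 : Rabs (T_op N D' f b alpha k h x - T_op N D' f b alpha k h' x) <= s * (eps / 2)).
    { apply (T_op_contraction D' k); [exact HD' | exact Hk | | exact Hx].
      intros y Hy. left. exact (H1 D' HD' (close_le N D D' _ _ (Rmin_l _ _) Hclose) y Hy). }
    assert (Hs_half : s * (eps / 2) <= eps / 2) by nra.
    replace (T_op N D f b alpha k h x - T_op N D' f b alpha k h' x)
      with ((T_op N D f b alpha k h x - T_op N D' f b alpha k h x)
            + (T_op N D' f b alpha k h x - T_op N D' f b alpha k h' x)) by ring.
    eapply Rle_lt_trans; [apply Rabs_triang | lra].
Qed.

Section InvariantBall.
Variables F K : R.
Hypothesis HF : forall y, a <= y <= c -> Rabs (f y) <= F.
Hypothesis HK : F + s * (K + B) <= K.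
Hypothesis HFK : F <= K.

Lemma T_op_ball D r h : is_partition a c N D -> (1 <= r)%nat ->
  (forall y, a <= y <= c -> Rabs (h y) <= K) ->
  forall x, a <= x <= c -> Rabs (T_op N D f b alpha r h x) <= K.
Proof.
  intros HD Hr Hh x Hx.
  destruct (seg_index_spec a c N D HD x Hx) as [Hi Hseg].
  pose proof (Q_map_range a c N D HD _ x Hi Hseg) as Hq.
  rewrite T_op_glue. unfold glue, T_summand.
  set (i := seg_index N D x) in *. set (q := Q_map N D i x) in *.
  assert (Hdiff : Rabs (h q - b r q) <= K + B).
  { pose proof (Hh q Hq). pose proof (Hb_bound r Hr q Hq).
    eapply Rle_trans; [apply Rabs_minus_le | lra]. }
  assert (Hprod : Rabs (alpha i r q * (h q - b r q)) <= s * (K + B)).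
  { rewrite Rabs_mult. apply Rmult_le_compat; [apply Rabs_pos | apply Rabs_pos | | exact Hdiff].
    exact (Halpha_bound i r Hi Hr q Hq). }
  pose proof (HF x Hx).
  eapply Rle_trans; [apply Rabs_triang | lra].
Qed.

Lemma iterT_ball D n k g : is_partition a c N D -> (1 <= k)%nat ->
  (forall y, a <= y <= c -> Rabs (g y) <= K) ->
  forall x, a <= x <= c -> Rabs (iterT N D f b alpha k n g x) <= K.
Proof.
  intros HD. revert k. induction n as [| n IH]; intros k Hk Hg x Hx; simpl; [exact (Hg x Hx) |].
  apply T_op_ball; [exact HD | exact Hk | | exact Hx].
  intros y Hy. apply IH; [lia | exact Hg | exact Hy].
Qed.

Lemma iterT_f_tail D n m x : is_partition a c N D -> a <= x <= c ->
  Rabs (iterT N D f b alpha 1 n f x - iterT N D f b alpha 1 (n + m) f x) <= s ^ n * (2 * K).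
Proof.
  intros HD Hx. rewrite iterT_add.
  apply (iterT_contraction D n 1); [exact HD | lia | | exact Hx].
  intros y Hy.
  assert (Hf_ball : forall z, a <= z <= c -> Rabs (f z) <= K)
    by (intros z Hz; specialize (HF z Hz); lra).
  pose proof (Hf_ball y Hy).
  pose proof (iterT_ball D m (1 + n) f HD ltac:(lia) Hf_ball y Hy).
  eapply Rle_trans; [apply Rabs_minus_le | lra].
Qed.

Lemma K_nonneg : 0 <= K.
Proof. pose proof (HF a ltac:(lra)). pose proof (Rabs_pos (f a)). lra. Qed.

Lemma is_ns_fractal_of_tail_bound D psi : is_partition a c N D ->
  (forall n x, a <= x <= c -> Rabs (iterT N D f b alpha 1 n f x - psi x) <= s ^ n * (2 * K)) ->
  is_ns_fractal N D f b alpha psi.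
Proof.
  intros HD Hpsi. pose proof HD as [_ [H0 [HN _]]].
  unfold is_ns_fractal. cbv zeta. rewrite H0, HN.
  intros g Hg Hga Hgc eps Heps.
  destruct (cont_on_bounded a c g (Rlt_le _ _ Hac) Hg) as [Mg HMg].
  assert (Hgf : forall y, a <= y <= c -> Rabs (g y - f y) <= Mg + F).
  { intros y Hy. pose proof (HMg y Hy). pose proof (HF y Hy).
    eapply Rle_trans; [apply Rabs_minus_le | lra]. }
  assert (HMgF : 0 <= Mg + F) by (pose proof (Hgf a ltac:(lra)); pose proof (Rabs_pos (g a - f a)); lra).
  pose proof K_nonneg.
  destruct (pow_mult_small s (Mg + F + 2 * K) eps Hs ltac:(lra) Heps) as [M HM].
  exists M. intros r Hr x Hx. specialize (HM r Hr).
  pose proof (iterT_contraction D r 1 g f (Mg + F) HD (le_n 1) Hgf x Hx).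
  pose proof (Hpsi r x Hx).
  replace (iterT N D f b alpha 1 r g x - psi x)
    with ((iterT N D f b alpha 1 r g x - iterT N D f b alpha 1 r f x)
          + (iterT N D f b alpha 1 r f x - psi x)) by ring.
  eapply Rle_lt_trans; [apply Rabs_triang | lra].
Qed.

Lemma ns_fractal_exists D : is_partition a c N D -> exists psi, is_ns_fractal N D f b alpha psi.
Proof.
  intros HD.
  pose (u := fun x n => iterT N D f b alpha 1 n f x).
  assert (Hcv : forall x, a <= x <= c -> exists l, Un_cv (u x) l).
  { intros x Hx.
    assert (Hcauchy : Cauchy_crit (u x)).
    { apply (Cauchy_crit_of_tail_bound _ s (2 * K) Hs); [pose proof K_nonneg; lra |].
      intros n m. exact (iterT_f_tail D n m x HD Hx). }
    destruct (R_complete _ Hcauchy) as [l Hl]. exists l. exact Hl. }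
  exists (fun x => epsilon (inhabits 0) (Un_cv (u x))).
  apply is_ns_fractal_of_tail_bound; [exact HD |]. intros n x Hx.
  apply (Un_cv_tail_bound (u x) _ (fun n => s ^ n * (2 * K)));
    [intros k m; exact (iterT_f_tail D k m x HD Hx) |].
  exact (epsilon_spec _ _ (Hcv x Hx)).
Qed.

Lemma ns_fractal_approx D n x : is_partition a c N D -> a <= x <= c ->
  Rabs (iterT N D f b alpha 1 n f x - ns_fractal N D f b alpha x) <= s ^ n * (2 * K).
Proof.
  intros HD Hx.
  assert (Hfr : is_ns_fractal N D f b alpha (ns_fractal N D f b alpha))
    by exact (epsilon_spec _ _ (ns_fractal_exists D HD)).
  pose proof HD as [_ [H0 [HN _]]].
  unfold is_ns_fractal in Hfr. cbv zeta in Hfr. rewrite H0, HN in Hfr.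
  apply (Un_cv_tail_bound (fun n => iterT N D f b alpha 1 n f x) _ (fun n => s ^ n * (2 * K)));
    [intros k m; exact (iterT_f_tail D k m x HD Hx) |].
  intros eps Heps.
  destruct (Hfr f (unif_cont_on_cont_on a c f Hf) eq_refl eq_refl eps Heps) as [M HM].
  exists M. intros r Hr. exact (HM r Hr x Hx).
Qed.

End InvariantBall.

Lemma ns_fractal_continuous_in_partition D : is_partition a c N D ->
  forall eps, 0 < eps -> exists del, 0 < del /\
    forall D', is_partition a c N D' -> close N D D' del ->
    forall x, a <= x <= c -> Rabs (ns_fractal N D f b alpha x - ns_fractal N D' f b alpha x) < eps.
Proof.
  intros HD eps Heps.
  destruct (cont_on_bounded a c f (Rlt_le _ _ Hac) (unif_cont_on_cont_on a c f Hf)) as [F HF].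
  pose proof (HF a ltac:(lra)). pose proof (Rabs_pos (f a)).
  pose proof (Hb_bound 1%nat (le_n 1) a ltac:(lra)). pose proof (Rabs_pos (b 1%nat a)).
  set (K := (F + B) / (1 - s)).
  assert (HK1 : (1 - s) * K = F + B) by (unfold K; field; lra).
  assert (HK : F + s * (K + B) <= K) by nra.
  assert (HFK : F <= K) by nra.
  destruct (pow_mult_small s (4 * K) (eps / 2) Hs ltac:(nra) ltac:(lra)) as [n Hn].
  assert (Hf_Cf : in_Cf a c f f) by (split; [exact Hf | split; reflexivity]).
  destruct (iterT_continuous_in_partition D n 1 f HD (le_n 1) Hf_Cf (eps / 2)) as [del [Hdel Hiter]];
    [lra |].
  exists del; split; [exact Hdel |]. intros D' HD' Hclose x Hx.
  pose proof (ns_fractal_approx F K HF HK HFK D n x HD Hx).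
  pose proof (ns_fractal_approx F K HF HK HFK D' n x HD' Hx).
  specialize (Hiter D' HD' Hclose x Hx). specialize (Hn n (le_n n)).
  set (u := iterT N D f b alpha 1 n f x) in *. set (u' := iterT N D' f b alpha 1 n f x) in *.
  replace (ns_fractal N D f b alpha x - ns_fractal N D' f b alpha x)
    with ((u - u') - (u - ns_fractal N D f b alpha x) + (u' - ns_fractal N D' f b alpha x)) by ring.
  eapply Rle_lt_trans; [apply Rabs_triang |].
  eapply Rle_lt_trans; [apply Rplus_le_compat_r, Rabs_minus_le | lra].
Qed.

End Operators.

Theorem mainTheorem12 (a c d : R) (N : nat)
  (f : R -> R) (b : nat -> R -> R) (alpha : nat -> nat -> R -> R) :
  a < c -> (1 <= N)%nat -> 0 < d <= 1 ->
  Lip_d a c d f ->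
  (forall r : nat, (1 <= r)%nat -> Lip_d a c d (b r)) ->
  (forall r : nat, (1 <= r)%nat -> b r a = f a /\ b r c = f c) ->
  (exists M : R, forall r : nat, (1 <= r)%nat ->
      forall x, a <= x <= c -> Rabs (b r x) <= M) ->
  (forall i r : nat, (1 <= i <= N)%nat -> (1 <= r)%nat -> Lip_d a c d (alpha i r)) ->
  (exists s : R, s < 1 /\ forall i r : nat, (1 <= i <= N)%nat -> (1 <= r)%nat ->
      forall x, a <= x <= c -> Rabs (alpha i r x) <= s) ->
  forall Delta : nat -> R, is_partition a c N Delta ->
  forall eps : R, 0 < eps -> exists delta : R, 0 < delta /\
    forall Delta' : nat -> R, is_partition a c N Delta' ->
      dist2 N Delta Delta' < delta ->
      forall x : R, a <= x <= c ->
        Rabs (ns_fractal N Delta f b alpha x - ns_fractal N Delta' f b alpha x) < eps.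
Proof.
  intros Hac HN Hd HfL HbL Hb_ends [B HB] HalphaL [s [Hs1 Hs]] D HD eps Heps.
  assert (Hs0 : 0 <= s).
  { pose proof (Hs 1%nat 1%nat ltac:(lia) ltac:(lia) a ltac:(lra)).
    pose proof (Rabs_pos (alpha 1%nat 1%nat a)). lra. }
  assert (Hunif : forall g, Lip_d a c d g -> unif_cont_on a c g)
    by (intros g; apply Lip_d_unif_cont; lra).
  destruct (ns_fractal_continuous_in_partition a c s B N f b alpha Hac (conj Hs0 Hs1)
              (Hunif f HfL) (fun r Hr => Hunif _ (HbL r Hr)) Hb_ends HB
              (fun i r Hi Hr => Hunif _ (HalphaL i r Hi Hr)) Hs D HD eps Heps)
    as [del [Hdel Hcont]].
  exists del; split; [exact Hdel |].
  intros D' HD' Hdist. exact (Hcont D' HD' (dist2_close N D D' del Hdist)).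
Qed.
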